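(* Let $w\in S_n$ be fireworks. Then the Rajchgot code $\mathrm{rajcode}(w)=(r_1,\ldots,r_n)$ satisfies $r_n=0$ and, for $i<n$, $r_i=r_{i+1}$ if $w(i)<w(i+1)$ and $r_i=r_{i+1}+1$ if $w(i)>w(i+1)$.
   Context: Permutations are written in one-line notation. The decreasing runs of $w$ are the maximal consecutive decreasing segments of the one-line notation; $w$ is fireworks if the initial elements of its decreasing runs occur in increasing order. The Rajchgot code of $w\in S_n$ is $\mathrm{rajcode}(w)=(r_1,\ldots,r_n)$, where $r_j$ is defined as follows: choose an increasing subsequence of $w(j),w(j+1),\ldots,w(n)$ containing $w(j)$ of greatest length among all such subsequences, and let $r_j$ be the number of terms of $w(j),\ldots,w(n)$ omitted to form it. *)

From mathcomp Require Import all_boot all_order all_fingroup.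
Set Implicit Arguments. Unset Strict Implicit. Unset Printing Implicit Defensive.

(* Conventions: positions and values are 0-indexed, w : 'S_n acting on 'I_n;
   the one-line notation of w is w 0, w 1, ..., w (n-1). *)

(* Position i starts a decreasing run: i = 0 or w(i-1) < w(i). *)
Definition run_start n (w : 'S_n) (i : 'I_n) : bool :=
  [forall j : 'I_n, (j.+1 == i :> nat) ==> (w j < w i)].

Definition fireworks n (w : 'S_n) : Prop :=
  forall i j : 'I_n, run_start w i -> run_start w j -> i < j -> w i < w j.

(* S is (the set of positions of) an increasing subsequence of
   w(j), ..., w(n-1) containing the term w(j). *)
Definition incr_subseq_from n (w : 'S_n) (j : 'I_n) (S : {set 'I_n}) : bool :=
  [&& j \in S, [forall k in S, j <= k]
    & [forall a in S, forall b in S, (a < b) ==> (w a < w b)]].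

Definition lis_from n (w : 'S_n) (j : 'I_n) : nat :=
  \max_(S : {set 'I_n} | incr_subseq_from w j S) #|S|.

(* Rajchgot code entry r_j: number of terms of w(j),...,w(n-1) omitted. *)
Definition rajcode n (w : 'S_n) (j : 'I_n) : nat := (n - j) - lis_from w j.

From mathcomp Require Import all_boot all_order all_fingroup.
From mathcomp Require Import zify.
Set Implicit Arguments. Unset Strict Implicit. Unset Printing Implicit Defensive.

(* An increasing subsequence meets each decreasing run at most once; when w is
   fireworks, the term w(j) followed by the initial elements of all runs
   starting after j is increasing.  Hence the longest increasing subsequence
   starting at w(j) has length 1 + #(runs starting after j), and the code
   entry r_j = n - j - 1 - #(runs starting after j) drops by one exactly when
   j + 1 starts a new run, i.e. at an ascent. *)

Lemma leq_card_in_iota (T : finType) (A : {pred T}) (f : T -> nat) m d :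
  {in A &, injective f} -> (forall x, x \in A -> m <= f x < m + d) ->
  #|A| <= d.
Proof.
move=> f_inj f_range; rewrite cardE -(size_map f) -(size_iota m d).
apply: uniq_leq_size.
  by rewrite map_inj_in_uniq ?enum_uniq // => x y; rewrite !mem_enum; exact: f_inj.
by move=> _ /mapP [x xA ->]; rewrite mem_iota f_range // -mem_enum.
Qed.

Section Runs.

Variables (n : nat) (w : 'S_n).

Definition later_run_starts (i : 'I_n) : {set 'I_n} :=
  [set k : 'I_n | i < k & run_start w k].

Definition run_index (k : 'I_n) : nat :=
  #|[set h : 'I_n | h <= k & run_start w h]|.

Lemma run_start_succ (i j : 'I_n) : j = i.+1 :> nat -> run_start w j = (w i < w j).
Proof.
move=> ji; apply/forallP/idP => [/(_ i) | wij k]; first by rewrite ji eqxx.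
apply/implyP => /eqP kj; suff -> : k = i by [].
by apply/val_inj; move: kj; rewrite ji /=; lia.
Qed.

Lemma not_run_start_pred (i : 'I_n) :
  ~~ run_start w i -> exists2 j : 'I_n, j.+1 = i :> nat & w i < w j.
Proof.
move/forallPn => [j]; rewrite negb_imply -leqNgt => /andP [/eqP ji wij].
exists j => //; rewrite ltn_neqAle wij andbT.
by apply/eqP => /val_inj/perm_inj eq_ij; move: ji; rewrite eq_ij; lia.
Qed.

Lemma run_start_between (a b : 'I_n) :
  a < b -> w a < w b -> exists2 h : 'I_n, a < h <= b & run_start w h.
Proof.
have [m] := ubnP b; elim: m b => // m IHm b bm ab wab.
have [b_start | /not_run_start_pred [j jb wbj]] := boolP (run_start w b).
  by exists b; rewrite // ab leqnn.
have aj : a < j.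
  rewrite ltn_neqAle -ltnS jb ab andbT; apply: contraTneq wab => /val_inj ->.
  by rewrite -leqNgt ltnW.
have jm : j < m by lia.
have [h /andP [ah hj] h_start] := IHm j jm aj (ltn_trans wab wbj).
by exists h; rewrite ?ah //= (leq_trans hj) // -jb.
Qed.

Lemma run_index_mono (a b : 'I_n) : a <= b -> run_index a <= run_index b.
Proof.
move=> ab; apply/subset_leq_card/subsetP => h; rewrite !inE => /andP [ha ->].
by rewrite (leq_trans ha ab).
Qed.

Lemma run_index_increasing (a b : 'I_n) :
  a < b -> w a < w b -> run_index a < run_index b.
Proof.
move=> ab wab; have [h /andP [ah hb] h_start] := run_start_between ab wab.
apply/proper_card/properP; split.
  by apply/subsetP => k; rewrite !inE => /andP [ka ->]; rewrite (leq_trans ka (ltnW ab)).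
by exists h; rewrite !inE ?hb ?h_start // leqNgt ah.
Qed.

Lemma run_index_le_later (i k : 'I_n) :
  run_index k <= run_index i + #|later_run_starts i|.
Proof.
apply: leq_trans (leq_card_setU _ _); apply/subset_leq_card/subsetP => h.
by rewrite !inE => /andP [_ ->]; rewrite !andbT leqNgt orNb.
Qed.

Lemma lis_from_le (i : 'I_n) : lis_from w i <= #|later_run_starts i|.+1.
Proof.
apply/bigmax_leqP => S /and3P [_ /forall_inP S_ge /forall_inP S_incr].
have incr a b : a \in S -> b \in S -> a < b -> w a < w b.
  by move=> aS bS ab; move: (S_incr a aS) => /forall_inP/(_ b bS); rewrite ab.
apply: (@leq_card_in_iota _ _ run_index (run_index i)) => [a b aS bS | k kS].
  case: (ltngtP a b) => [ab | ba | /val_inj //] eq_ab.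
    by have := run_index_increasing ab (incr a b aS bS ab); rewrite eq_ab ltnn.
  by have := run_index_increasing ba (incr b a bS aS ba); rewrite eq_ab ltnn.
by rewrite run_index_mono ?S_ge // addnS ltnS run_index_le_later.
Qed.

Lemma card_later_run_starts_lt (j : 'I_n) : #|later_run_starts j| < n - j.
Proof.
rewrite -[n - j]prednK ?subn_gt0 // ltnS.
apply: (@leq_card_in_iota _ _ (@nat_of_ord n) j.+1) => [a b _ _ /ord_inj // | k].
by rewrite inE => /andP [jk _]; have := ltn_ord k; have := ltn_ord j; lia.
Qed.

Lemma card_later_run_starts_succ (i j : 'I_n) : j = i.+1 :> nat ->
  #|later_run_starts i| = #|later_run_starts j| + (w i < w j).
Proof.
move=> ji; have ik_split (k : 'I_n) : (i < k) = (k == j) || (j < k).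
  by rewrite -(inj_eq val_inj) /= ji; lia.
have [wij | wji] := boolP (w i < w j).
  have -> : later_run_starts i = j |: later_run_starts j.
    apply/setP => k; rewrite !inE ik_split; case: eqP => [-> | //].
    by rewrite (run_start_succ ji) wij.
  by rewrite cardsU1 inE ltnn addnC.
have -> : later_run_starts i = later_run_starts j.
  apply/setP => k; rewrite !inE ik_split; case: eqP => [-> | //].
  by rewrite ltnn (run_start_succ ji) (negbTE wji).
by rewrite addn0.
Qed.

Section Fireworks.

Hypothesis fw : fireworks w.

Lemma fireworks_lt_run_start (i k : 'I_n) :
  i < k -> run_start w k -> w i < w k.
Proof.
have [m] := ubnP i; elim: m i => // m IHm i im ik k_start.
have [i_start | /not_run_start_pred [j ji wij]] := boolP (run_start w i).
  exact: fw.
by rewrite (ltn_trans wij) // IHm; lia.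
Qed.

Lemma incr_subseq_from_later_run_starts (i : 'I_n) :
  incr_subseq_from w i (i |: later_run_starts i).
Proof.
apply/and3P; split; first exact: setU11.
  by apply/forall_inP => k; rewrite !inE => /orP [/eqP -> // | /andP [/ltnW]].
apply/forall_inP => a aS; apply/forall_inP => b bS; apply/implyP => ab.
have ib : i < b.
  by move: aS; rewrite !inE => /orP [/eqP <- // | /andP [/ltn_trans->]].
move: bS; rewrite !inE -val_eqE /= (gtn_eqF ib) => /andP [_ b_start].
exact: fireworks_lt_run_start ab b_start.
Qed.

Lemma lis_from_fireworks (i : 'I_n) : lis_from w i = #|later_run_starts i|.+1.
Proof.
apply/eqP; rewrite eqn_leq lis_from_le /=.
have := @leq_bigmax_cond _ _ (fun S : {set 'I_n} => #|S|) _
  (incr_subseq_from_later_run_starts i).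
by rewrite cardsU1 inE ltnn.
Qed.

Lemma rajcode_fireworks (j : 'I_n) : rajcode w j = n - j.+1 - #|later_run_starts j|.
Proof. by rewrite /rajcode lis_from_fireworks -subnDA addnS -addSn subnDA. Qed.

End Fireworks.

End Runs.

Theorem lemma3p12 (n : nat) (w : 'S_n) :
  fireworks w ->
  (forall j : 'I_n, j.+1 = n -> rajcode w j = 0) /\
  (forall i j : 'I_n, j = i.+1 :> nat ->
     (w i < w j -> rajcode w i = rajcode w j) /\
     (w j < w i -> rajcode w i = (rajcode w j).+1)).
Proof.
move=> fw; split => [j jn | i j ji]; rewrite !rajcode_fireworks //.
  by rewrite jn subnn.
rewrite (card_later_run_starts_succ w ji); have := card_later_run_starts_lt w j.
by split => [-> | /ltnW/leq_gtF ->]; lia.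
Qed.
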